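(* Let $P$ be a protocol for anonymous transmissions (achieving sender anonymity) among $n$ players in which the only resources available are pairwise shared secret key bits, a reliable broadcast channel and public communication. Then every node of the key-sharing graph $G=(V,E)$ of $P$ has degree at least $2$ (otherwise the anonymity of a player of degree $1$ can be broken by his unique neighbour).
   Context: The key-sharing graph of the protocol is the undirected graph $G=(V,E)$ whose nodes are the players, with an edge between nodes $i$ and $j$ iff $i$ and $j$ share one bit of secret key. Sender anonymity: for an adversary corrupting a set of $t\le n-2$ players not including the sender $s$ and observing all communication $C$ and the randomness $G^t$ of the corrupted players, $\max_S\Pr[S=s\mid G^t,C]=\max_S\Pr[S=s]=1/(n-t)$, maximum over random variables $S$ depending only on $C$ and $G^t$. *)

From mathcomp Require Import all_boot all_order all_algebra.
Set Implicit Arguments. Unset Strict Implicit. Unset Printing Implicit Defensive.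
Import Order.TTheory GRing.Theory Num.Theory.
Local Open Scope ring_scope.

Section Protocol.
Variables (n : nat) (M Rnd B : finType).

(* A sample of keys: one uniformly random bit for every ordered pair; the key
   shared by i and j is the bit of the pair (min, max).  Only the bits of
   edges of the key-sharing graph are ever given to a player. *)
Definition keys := {ffun 'I_n * 'I_n -> bool}.
Definition pair_key (K : keys) (i j : 'I_n) : bool :=
  if (i <= j)%N then K (i, j) else K (j, i).

Definition key_vec (E : rel 'I_n) (K : keys) (i : 'I_n) : {ffun 'I_n -> bool} :=
  [ffun j => if E i j then pair_key K i j else false].

Definition round := {ffun 'I_n -> B}.

(* Next-message function: player i, its input (Some m iff it is the sender
   with message m), its private randomness, its key bits, and the public
   transcript so far. *)
Definition actT := 'I_n -> option M -> Rnd -> {ffun 'I_n -> bool} -> seq round -> B.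
Definition outT := 'I_n -> option M -> Rnd -> {ffun 'I_n -> bool} -> seq round -> M.

Definition input (s : 'I_n) (m : M) (j : 'I_n) : option M :=
  if j == s then Some m else None.

Fixpoint transcript (E : rel 'I_n) (act : actT) (inp : 'I_n -> option M)
  (K : keys) (rs : {ffun 'I_n -> Rnd}) (k : nat) : seq round :=
  match k with
  | 0 => [::]
  | k'.+1 => let h := transcript E act inp K rs k' in
             rcons h [ffun i => act i (inp i) (rs i) (key_vec E K i) h]
  end.

Variable R : realFieldType.

Definition weight (rho : 'I_n -> Rnd -> R) (K : keys) (rs : {ffun 'I_n -> Rnd}) : R :=
  (#|{: keys}|%:R)^-1 * \prod_(i < n) rho i (rs i).

Definition is_distr (rho : 'I_n -> Rnd -> R) : Prop :=
  forall i, (forall r, 0 <= rho i r) /\ \sum_(r : Rnd) rho i r = 1.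

(* View of an adversary corrupting the set A: the whole public communication
   C together with the randomness G^t (private coins and key bits) of the
   corrupted players. *)
Definition viewT := (seq round * {ffun 'I_n -> option Rnd}
                     * {ffun 'I_n -> option {ffun 'I_n -> bool}})%type.

Definition view (E : rel 'I_n) (act : actT) (T : nat) (A : {set 'I_n})
  (inp : 'I_n -> option M) (K : keys) (rs : {ffun 'I_n -> Rnd}) : viewT :=
  (transcript E act inp K rs T,
   [ffun a => if a \in A then Some (rs a) else None],
   [ffun a => if a \in A then Some (key_vec E K a) else None]).

(* Pr[S = s] where S = g(C, G^t) is the adversary's guess and the sender s is
   uniformly distributed over the n - t honest players, sending message m. *)
Definition guess_prob (E : rel 'I_n) (act : actT) (T : nat)
  (rho : 'I_n -> Rnd -> R) (A : {set 'I_n}) (m : M) (g : viewT -> 'I_n) : R :=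
  \sum_(s in ~: A) (#|~: A|%:R)^-1 *
    \sum_(K : keys) \sum_(rs : {ffun 'I_n -> Rnd})
      weight rho K rs * (g (view E act T A (input s m) K rs) == s)%:R.

(* Sender anonymity against every set of t <= n - 2 corrupted players:
   max_S Pr[S = s | G^t, C] = 1/(n - t). *)
Definition sender_anonymous (E : rel 'I_n) (act : actT) (T : nat)
  (rho : 'I_n -> Rnd -> R) : Prop :=
  forall (A : {set 'I_n}) (m : M), (#|A| <= n - 2)%N ->
    (forall g, guess_prob E act T rho A m g <= (#|~: A|%:R)^-1) /\
    (exists g, guess_prob E act T rho A m g = (#|~: A|%:R)^-1).

Definition transmits (E : rel 'I_n) (act : actT) (out : outT) (T : nat)
  (rho : 'I_n -> Rnd -> R) : Prop :=
  forall (s : 'I_n) (m : M) (K : keys) (rs : {ffun 'I_n -> Rnd}),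
    (forall i, 0 < rho i (rs i)) ->
    forall j, out j (input s m j) (rs j) (key_vec E K j)
                  (transcript E act (input s m) K rs T) = m.

Definition degree (E : rel 'I_n) (i : 'I_n) : nat := #|[set j | E i j]|.

End Protocol.

From mathcomp Require Import all_boot all_order all_algebra.
From mathcomp Require Import ring lra zify.
Set Implicit Arguments. Unset Strict Implicit. Unset Printing Implicit Defensive.
Import Order.TTheory GRing.Theory Num.Theory.
Local Open Scope ring_scope.

(* In fact any two players must share a key, and a player of degree at most 1
   has a non-neighbour.  Suppose i and k share no key and corrupt everybody
   else.  Anonymity forces the adversary's view to be distributed identically
   whether i or k sends.  Since all keys of k are held by corrupted players,
   exchanging the private coins of k between two runs with the same view
   yields two runs with that view in which both, resp. none, of i and k send;
   hence Q_i(v)^2 <= Q_both(v) Q_none(v) for the view distributions, and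
   equality in AM-GM gives Q_i = Q_none.  So the view of a corrupted player
   does not depend on the message, contradicting correct delivery of two
   distinct messages. *)

Section DistributionEquality.
Variables (R : realFieldType) (V : eqType).
Implicit Types (s : seq V) (f g a b : V -> R).

Lemma eq_in_of_le_sum s f g :
  {in s, forall v, f v <= g v} -> \sum_(v <- s) g v <= \sum_(v <- s) f v ->
  {in s, f =1 g}.
Proof.
move=> le_fg le_sum; have gf_ge0 v : v \in s -> 0 <= g v - f v.
  by move=> sv; rewrite subr_ge0 le_fg.
have: \sum_(v <- s | v \in s) (g v - f v) == 0.
  by rewrite eq_le sumr_ge0 // andbT -big_seq sumrB subr_le0 le_sum.
rewrite psumr_eq0 // => /allP eq0 v sv.
by apply/esym/eqP; rewrite -subr_eq0; have := eq0 v sv; rewrite sv.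
Qed.

Lemma eq_in_of_sum_max_le1 s f g :
  \sum_(v <- s) f v = 1 -> \sum_(v <- s) g v = 1 ->
  \sum_(v <- s) Num.max (f v) (g v) <= 1 -> {in s, f =1 g}.
Proof.
move=> sf sg smax; pose h v := Num.max (f v) (g v).
have le_f: {in s, forall v, f v <= h v} by move=> v _; rewrite le_max lexx.
have le_g: {in s, forall v, g v <= h v} by move=> v _; rewrite le_max lexx orbT.
move=> v sv; rewrite (eq_in_of_le_sum le_f) ?sf //.
by rewrite (eq_in_of_le_sum le_g) ?sg.
Qed.

Lemma eq_in_of_sqr_le_mul s f a b :
  (forall v, 0 <= a v) -> (forall v, 0 <= b v) ->
  \sum_(v <- s) f v = 1 -> \sum_(v <- s) a v = 1 -> \sum_(v <- s) b v = 1 ->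
  {in s, forall v, f v ^+ 2 <= a v * b v} -> {in s, f =1 b}.
Proof.
move=> a_ge0 b_ge0 sf sa sb le_fab.
have mean: {in s, (fun v => 2 * f v) =1 (fun v => a v + b v)}.
  apply: eq_in_of_le_sum => [v sv|]; last by rewrite big_split -mulr_sumr sf sa sb mulr1.
  have := le_fab v sv; have := a_ge0 v; have := b_ge0 v.
  have := sqr_ge0 (a v - b v); nra.
move=> v sv; have := mean v sv; have := le_fab v sv; rewrite /= expr2 => fab efab.
have: (f v - b v) ^+ 2 == 0 by rewrite eq_le sqr_ge0 andbT expr2; nra.
by rewrite sqrf_eq0 subr_eq0 => /eqP.
Qed.

Lemma mul_double_sums (X Y : finType) (F G : X -> Y -> R) :
  (\sum_x \sum_y F x y) * (\sum_x \sum_y G x y) =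
  \sum_x1 \sum_x2 \sum_(p : Y * Y) F x1 p.1 * G x2 p.2.
Proof.
rewrite big_distrl /=; apply: eq_bigr => x1 _.
rewrite big_distrr /=; apply: eq_bigr => x2 _.
by rewrite big_distrlr /= pair_big.
Qed.

End DistributionEquality.

Section Protocol.
Variables (R : realFieldType) (n : nat) (M Rnd B : finType).
Variables (E : rel 'I_n) (act : actT n M Rnd B) (T : nat) (rho : 'I_n -> Rnd -> R).
Implicit Types (inp : 'I_n -> option M) (K : keys n) (rs : {ffun 'I_n -> Rnd}).
Implicit Types (A : {set 'I_n}) (v : viewT n Rnd B).

Definition local_state inp K rs (j : 'I_n) := (inp j, rs j, key_vec E K j).

(* Each broadcast is a function of the sender's local state and of the public
   history, so mixing the local states of two runs with equal transcripts
   does not change the transcript. *)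
Lemma transcript_mix inpX inpY inpZ KX KY KZ rsX rsY rsZ r :
  (forall j, local_state inpZ KZ rsZ j = local_state inpX KX rsX j \/
             local_state inpZ KZ rsZ j = local_state inpY KY rsY j) ->
  transcript E act inpX KX rsX r = transcript E act inpY KY rsY r ->
  transcript E act inpZ KZ rsZ r = transcript E act inpX KX rsX r.
Proof.
move=> mix; elim: r => [//|r IH] /= /rcons_inj[eq_hist eq_round].
rewrite IH //; congr rcons; apply/ffunP => j; rewrite !ffunE.
case: (mix j) => -[-> -> ->] //.
by have := congr1 (fun f : round n B => f j) eq_round; rewrite !ffunE eq_hist.
Qed.

Lemma view_eq_input A inp1 inp2 K rs :
  inp1 =1 inp2 -> view E act T A inp1 K rs = view E act T A inp2 K rs.
Proof.
move=> eq_inp; rewrite /view (@transcript_mix inp2 inp2 _ K K K rs rs) //.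
by move=> j; left; rewrite /local_state eq_inp.
Qed.

Lemma output_eq_of_view A (out : outT n M Rnd B) inp1 inp2 K1 K2 rs1 rs2 a :
  a \in A -> inp1 a = inp2 a ->
  view E act T A inp1 K1 rs1 = view E act T A inp2 K2 rs2 ->
  out a (inp1 a) (rs1 a) (key_vec E K1 a) (transcript E act inp1 K1 rs1 T) =
  out a (inp2 a) (rs2 a) (key_vec E K2 a) (transcript E act inp2 K2 rs2 T).
Proof.
move=> aA -> [-> eq_rs eq_keys].
have := congr1 (fun f : {ffun 'I_n -> option Rnd} => f a) eq_rs.
have := congr1 (fun f : {ffun 'I_n -> option {ffun 'I_n -> bool}} => f a) eq_keys.
by rewrite !ffunE aA => -[->] [->].
Qed.

(* A finite list containing every possible view; views are sequences, so
   there is no finite type of views to sum over. *)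
Definition views A : seq (viewT n Rnd B) :=
  let states := ({ffun 'I_n -> option M} * keys n * {ffun 'I_n -> Rnd})%type in
  undup [seq view E act T A (fun j => p.1.1 j) p.1.2 p.2 | p : states <- enum {: states}].

Lemma view_in_views A inp K rs : view E act T A inp K rs \in views A.
Proof.
rewrite mem_undup; apply/mapP; exists ([ffun j => inp j], K, rs); first by rewrite mem_enum.
by apply: view_eq_input => j; rewrite ffunE.
Qed.

Definition view_prob A inp v : R :=
  \sum_K \sum_rs weight rho K rs * (view E act T A inp K rs == v)%:R.

Hypothesis rho_distr : is_distr rho.

Lemma weight_ge0 K rs : 0 <= weight rho K rs.
Proof.
rewrite mulr_ge0 ?invr_ge0 ?ler0n // prodr_ge0 // => j _.
by case: (rho_distr j).
Qed.

Lemma rho_gt0_of_weight_gt0 K rs : 0 < weight rho K rs -> forall j, 0 < rho j (rs j).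
Proof.
move=> w_gt0 j; rewrite lt0r; case: (rho_distr j) => -> _; rewrite andbT.
by apply: contraTneq w_gt0 => rho0; rewrite /weight (bigD1 j) //= rho0 mul0r mulr0 ltxx.
Qed.

Lemma weight_sum1 : \sum_K \sum_rs weight rho K rs = 1.
Proof.
under eq_bigr => K _ do rewrite -mulr_sumr -bigA_distr_bigA /=.
have -> : \prod_(j < n) \sum_(x : Rnd) rho j x = 1.
  by apply: big1 => j _; case: (rho_distr j).
rewrite mulr1 sumr_const -[X in X = 1]mulr_natr mulVf // pnatr_eq0 -lt0n.
by rewrite card_ffun expn_gt0 card_bool.
Qed.

Lemma view_prob_ge0 A inp v : 0 <= view_prob A inp v.
Proof.
by rewrite sumr_ge0 // => K _; rewrite sumr_ge0 // => rs _; rewrite mulr_ge0 ?weight_ge0.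
Qed.

Lemma sum_view_prob A inp (h : viewT n Rnd B -> R) :
  \sum_(v <- views A) view_prob A inp v * h v =
  \sum_K \sum_rs weight rho K rs * h (view E act T A inp K rs).
Proof.
under eq_bigr => v _ do rewrite big_distrl /=.
rewrite exchange_big /=; apply: eq_bigr => K _.
under eq_bigr => v _ do rewrite big_distrl /=.
rewrite exchange_big /=; apply: eq_bigr => rs _.
rewrite (bigD1_seq (view E act T A inp K rs)) ?view_in_views ?undup_uniq //=.
rewrite eqxx mulr1 big1 ?addr0 // => v /negbTE neq_v.
by rewrite eq_sym neq_v mulr0 mul0r.
Qed.

Lemma view_prob_sum1 A inp : \sum_(v <- views A) view_prob A inp v = 1.
Proof.
rewrite -weight_sum1 -(eq_bigr _ (fun v _ => mulr1 (view_prob A inp v))).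
by rewrite sum_view_prob; under eq_bigr do under eq_bigr do rewrite mulr1.
Qed.

Lemma view_prob_gt0 A inp v : 0 < view_prob A inp v ->
  exists K rs, (forall j, 0 < rho j (rs j)) /\ view E act T A inp K rs = v.
Proof.
move=> /lt0r_neq0/eqP/psumr_neq0P[K|K /andP[_]].
  by move=> _; rewrite sumr_ge0 // => rs _; rewrite mulr_ge0 ?weight_ge0.
move=> /lt0r_neq0/eqP/psumr_neq0P[rs _|rs /andP[_]]; first by rewrite mulr_ge0 ?weight_ge0.
have [<-|_] := eqVneq (view E act T A inp K rs) v; last by rewrite mulr0 ltxx.
by rewrite mulr1 => /rho_gt0_of_weight_gt0 rho_gt0; exists K, rs.
Qed.

Definition set_coin rs (k : 'I_n) (x : Rnd) : {ffun 'I_n -> Rnd} :=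
  [ffun j => if j == k then x else rs j].

Lemma set_coinK rs1 rs2 k :
  set_coin (set_coin rs1 k (rs2 k)) k (set_coin rs2 k (rs1 k) k) = rs1.
Proof. by apply/ffunP => j; rewrite !ffunE eqxx; case: eqP => // ->. Qed.

Lemma weight_swap_coin K1 K2 rs1 rs2 k :
  weight rho K1 (set_coin rs1 k (rs2 k)) * weight rho K2 (set_coin rs2 k (rs1 k)) =
  weight rho K1 rs1 * weight rho K2 rs2.
Proof.
have split rs :
    \prod_(j < n) rho j (rs j) = rho k (rs k) * \prod_(j < n | j != k) rho j (rs j).
  exact: bigD1.
have others rs x : \prod_(j < n | j != k) rho j (set_coin rs k x j) =
                   \prod_(j < n | j != k) rho j (rs j).
  by apply: eq_bigr => j /negbTE jk; rewrite ffunE jk.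
by rewrite /weight !split !ffunE !eqxx (others rs1) (others rs2); ring.
Qed.

Lemma pair_keyC K (j1 j2 : 'I_n) : pair_key K j1 j2 = pair_key K j2 j1.
Proof. by rewrite /pair_key; case: ltngtP => // /val_inj->. Qed.

Definition no_input : 'I_n -> option M := fun _ => None.

Section NonAdjacentPair.
Hypotheses (E_sym : symmetric E) (E_irr : irreflexive E).
Variables (i k : 'I_n).
Hypothesis neq_ik : i != k.
Local Notation A := (~: [set i; k]).

Definition pair_input (m : M) (j : 'I_n) : option M :=
  if (j == i) || (j == k) then Some m else None.

Lemma mem_pair_compl j : (j \in A) = (j != i) && (j != k).
Proof. by rewrite !inE negb_or. Qed.

Lemma card_pair_compl : #|A| = (n - 2)%N.
Proof. by have := cardsC [set i; k]; rewrite card_ord cards2 neq_ik; lia. Qed.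

(* Every neighbour of k lies in A, so k's keys are all visible in A's keys. *)
Lemma key_vec_nonadj K1 K2 : ~~ E i k ->
  (forall a, a \in A -> key_vec E K1 a = key_vec E K2 a) ->
  key_vec E K1 k = key_vec E K2 k.
Proof.
move=> nEik eqA; apply/ffunP => j; rewrite !ffunE.
case Ekj: (E k j) => //.
have jA : j \in A.
  rewrite mem_pair_compl; apply/andP; split; apply: contraTneq Ekj => ->.
    by rewrite E_sym (negbTE nEik).
  by rewrite E_irr.
have := congr1 (fun f : {ffun 'I_n -> bool} => f k) (eqA j jA).
by rewrite !ffunE E_sym Ekj !(pair_keyC _ j).
Qed.

Lemma view_rectangle m K1 K2 rs1 rs2 v : ~~ E i k ->
  view E act T A (input i m) K1 (set_coin rs1 k (rs2 k)) = v ->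
  view E act T A (input k m) K2 (set_coin rs2 k (rs1 k)) = v ->
  view E act T A (pair_input m) K1 rs1 = v /\ view E act T A no_input K2 rs2 = v.
Proof.
move=> nEik <- run2; case: (run2) => eq_tr eq_coins eq_keys.
have keysA a : a \in A -> key_vec E K1 a = key_vec E K2 a.
  move=> aA; have := congr1 (fun f : {ffun 'I_n -> option {ffun 'I_n -> bool}} => f a) eq_keys.
  by rewrite !ffunE aA => -[].
have key_k := key_vec_nonadj nEik keysA.
have coinsA rs x : [ffun a => if a \in A then Some (set_coin rs k x a) else None] =
                   [ffun a => if a \in A then Some (rs a) else None].
  apply/ffunP => a; rewrite !ffunE mem_pair_compl.
  by case: (eqVneq a k) => [->|ak]; rewrite ?eqxx ?andbF // ffunE (negbTE ak).
split.
- rewrite /view -(coinsA rs1 (rs2 k)); congr (_, _, _).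
  apply: (transcript_mix (inpY := input k m) (KY := K2) (rsY := set_coin rs2 k (rs1 k))).
    move=> j; rewrite /local_state /pair_input /input !ffunE.
    case: (eqVneq j k) => [->|_]; [right|left]; first by rewrite orbT key_k.
    by rewrite orbF.
  by rewrite eq_tr.
- rewrite -run2 /view -(coinsA rs2 (rs1 k)); congr (_, _, _).
  apply: (transcript_mix (inpY := input i m) (KY := K1) (rsY := set_coin rs1 k (rs2 k)) _ eq_tr).
  move=> j; rewrite /local_state /no_input /input !ffunE.
  case: (eqVneq j k) => [->|_]; [right|by left].
  by rewrite eq_sym (negbTE neq_ik) key_k.
Qed.

Lemma view_prob_rectangle m v : ~~ E i k ->
  view_prob A (input i m) v * view_prob A (input k m) v <=
  view_prob A (pair_input m) v * view_prob A no_input v.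
Proof.
move=> nEik; rewrite /view_prob !mul_double_sums.
apply: ler_sum => K1 _; apply: ler_sum => K2 _.
pose swap (p : {ffun 'I_n -> Rnd} * {ffun 'I_n -> Rnd}) :=
  (set_coin p.1 k (p.2 k), set_coin p.2 k (p.1 k)).
have swapK : involutive swap by case=> rs1 rs2; rewrite /swap /= !set_coinK.
rewrite (reindex_inj (inv_inj swapK)) /=; apply: ler_sum => -[rs1 rs2] _ /=.
rewrite mulrACA weight_swap_coin [leRHS]mulrACA.
apply: ler_wpM2l; first exact: mulr_ge0 (weight_ge0 _ _) (weight_ge0 _ _).
have [run1|_] := eqVneq (view E act T A (input i m) K1 (set_coin rs1 k (rs2 k))) v; last first.
  by rewrite /= mul0r mulr_ge0 ?ler0n.
have [run2|_] := eqVneq (view E act T A (input k m) K2 (set_coin rs2 k (rs1 k))) v; last first.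
  by rewrite /= mulr0 mulr_ge0 ?ler0n.
by have [-> ->] := view_rectangle nEik run1 run2; rewrite eqxx.
Qed.

Lemma guess_prob_pair m g : guess_prob E act T rho A m g =
  2^-1 * \sum_(v <- views A) (view_prob A (input i m) v * (g v == i)%:R +
                               view_prob A (input k m) v * (g v == k)%:R).
Proof.
rewrite /guess_prob setCK big_setU1 ?in_set1 //= big_set1 cards2 neq_ik -mulrDr.
rewrite big_split (sum_view_prob _ _ (fun v => (g v == i)%:R)).
by rewrite (sum_view_prob _ _ (fun v => (g v == k)%:R)).
Qed.

Lemma view_prob_input_swap m : sender_anonymous E act T rho ->
  {in views A, view_prob A (input i m) =1 view_prob A (input k m)}.
Proof.
move=> anon; have [le_guess _] := anon A m (eq_leq card_pair_compl).
pose g v := if view_prob A (input k m) v <= view_prob A (input i m) v then i else k.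
apply: eq_in_of_sum_max_le1; rewrite ?view_prob_sum1 //.
have := le_guess g; rewrite guess_prob_pair setCK cards2 neq_ik -[leRHS]mulr1.
rewrite ler_pM2l ?invr_gt0 ?ltr0n // => le_sum; apply: le_trans le_sum.
rewrite le_eqVlt; apply/orP; left; apply/eqP/eq_bigr => v _; rewrite /g; case: leP => _.
  by rewrite eqxx (negbTE neq_ik) mulr1 mulr0 addr0.
by rewrite eqxx eq_sym (negbTE neq_ik) mulr1 mulr0 add0r.
Qed.

Lemma view_prob_input_none m : sender_anonymous E act T rho -> ~~ E i k ->
  {in views A, view_prob A (input i m) =1 view_prob A no_input}.
Proof.
move=> anon nEik.
apply: (eq_in_of_sqr_le_mul (a := view_prob A (pair_input m))) => [v|v||||v vs];
  rewrite ?view_prob_ge0 ?view_prob_sum1 //.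
by rewrite expr2 {2}(view_prob_input_swap m anon vs) view_prob_rectangle.
Qed.

Lemma key_graph_complete (out : outT n M Rnd B) : (2 < n)%N -> (1 < #|M|)%N ->
  transmits E act out T rho -> sender_anonymous E act T rho -> E i k.
Proof.
move=> n_gt2 M_gt1 correct anon; apply: contraT => nEik.
have [a aA] : exists a, a \in A by apply/card_gt0P; rewrite card_pair_compl; lia.
have [m [m' [_ _ neq_mm']]] := card_gt1P M_gt1.
have [v vs Qv_gt0] : exists2 v, v \in views A & 0 < view_prob A (input i m) v.
  have: \sum_(v <- views A) view_prob A (input i m) v != 0.
    by rewrite view_prob_sum1 oner_neq0.
  rewrite psumr_neq0 => [/hasP[v vs /andP[_ Qv]]|v _]; first by exists v.
  exact: view_prob_ge0.
have Qv'_gt0 : 0 < view_prob A (input i m') v.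
  by rewrite (view_prob_input_none m' anon nEik vs) -(view_prob_input_none m anon nEik vs).
have [K [rs [rho_gt0 run]]] := view_prob_gt0 Qv_gt0.
have [K' [rs' [rho_gt0' run']]] := view_prob_gt0 Qv'_gt0.
have a_silent (mu : M) : input i mu a = None.
  by move: aA; rewrite mem_pair_compl /input => /andP[/negbTE-> _].
have := output_eq_of_view out aA (etrans (a_silent m) (esym (a_silent m')))
                                  (etrans run (esym run')).
rewrite (correct i m K rs rho_gt0) (correct i m' K' rs' rho_gt0') => eq_mm'.
by rewrite eq_mm' eqxx in neq_mm'.
Qed.

End NonAdjacentPair.
End Protocol.

Lemma exists_nonneighbour n (E : rel 'I_n) (i : 'I_n) :
  ((degree E i).+1 < n)%N -> exists2 k, k != i & ~~ E i k.
Proof.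
move=> deg_lt; have: (0 < #|~: (i |: [set j | E i j])|)%N.
  have := cardsC (i |: [set j | E i j]); rewrite card_ord cardsU1 /degree in deg_lt *.
  by case: (i \notin _); lia.
by case/card_gt0P => k; rewrite !inE negb_or => /andP[ki nEik]; exists k.
Qed.

Theorem mainTheorem3 (R : realFieldType) (n : nat) (M Rnd B : finType)
  (E : rel 'I_n) (act : actT n M Rnd B) (out : outT n M Rnd B) (T : nat)
  (rho : 'I_n -> Rnd -> R) :
  (2 < n)%N -> (1 < #|M|)%N ->
  symmetric E -> irreflexive E ->
  is_distr rho ->
  transmits E act out T rho ->
  sender_anonymous E act T rho ->
  forall i : 'I_n, (2 <= degree E i)%N.
Proof.
move=> n_gt2 M_gt1 E_sym E_irr rho_distr correct anon i.
rewrite leqNgt; apply/negP => deg_lt2.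
have [k ki nEik] := exists_nonneighbour (leq_ltn_trans deg_lt2 n_gt2).
have Eki := key_graph_complete rho_distr E_sym E_irr ki n_gt2 M_gt1 correct anon.
by rewrite E_sym Eki in nEik.
Qed.
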